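(* Let $\rho$ be a function quasi-norm over a $\sigma$-finite measure space $(\Omega,\Sigma,\mu)$ with the Fatou property, and let $X$ be a Banach space. If $x$ and $x_n$ ($n\in\mathbb{N}$) are measurable functions $\Omega\to X$ with $\lim_n\rho(\|x-x_n\|)=0$ and $\sup_n\|x_n\|\le g$ a.e. for some absolutely continuous $g\in L_0^+(\mu)$ with $\rho(g)<\infty$, then $\lim_n\rho(\|x_n\|)=\rho(\|x\|)$.
   Context: $L_0^+(\mu)$: measurable functions $\Omega\to[0,\infty]$ modulo a.e. equality. A function quasi-norm is $\rho\colon L_0^+(\mu)\to[0,\infty]$ with (F1) $\rho(tf)=t\rho(f)$, $t\ge0$; (F2) $f\le g$ a.e. $\Rightarrow\rho(f)\le\rho(g)$; (F3) $\rho(\chi_E)<\infty$ if $\mu(E)<\infty$; (F4) for all $E$ with $\mu(E)<\infty$ and $\varepsilon>0$ there is $\delta>0$ with $\mu(A)\le\varepsilon$ whenever $A\subseteq E$ measurable and $\rho(\chi_A)\le\delta$; (F5) $\rho(f+g)\le\kappa(\rho(f)+\rho(g))$. Fatou property: $\rho(\lim_nf_n)\le\lim_n\rho(f_n)$ for every non-decreasing $(f_n)$ in $L_0^+(\mu)$. A function $g\in L_0^+(\mu)$ with $\rho(g)<\infty$ is absolutely continuous (w.r.t. $\rho$) if $\lim_n\rho(f_n)=\rho(\lim_nf_n)$ for every non-increasing sequence $(f_n)$ in $L_0^+(\mu)$ with $f_1\le g$. *)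

From HB Require Import structures.
From mathcomp Require Import all_boot all_order all_algebra.
From mathcomp Require Import all_classical all_reals all_analysis measurable_realfun.
Set Implicit Arguments. Unset Strict Implicit. Unset Printing Implicit Defensive.
Import Order.TTheory GRing.Theory Num.Theory.
Import numFieldNormedType.Exports.
Local Open Scope classical_set_scope.
Local Open Scope ring_scope.
Local Open Scope ereal_scope.

Section FunctionQuasiNorm.
Context {d : measure_display} {T : measurableType d} {R : realType}.
Variable mu : {measure set T -> \bar R}.

(* elements of L_0^+(mu) (representatives): measurable, [0,oo]-valued *)
Definition L0plus (f : T -> \bar R) : Prop :=
  measurable_fun setT f /\ forall t, 0 <= f t.

Definition eindic (A : set T) : T -> \bar R := fun t => (\1_A t)%:E.

(* rho is defined on all functions, but only its values on L0plus matter.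
   (F2) is stated with "a.e." so rho respects a.e.-equality. *)
Definition function_quasi_norm (rho : (T -> \bar R) -> \bar R) : Prop :=
  (forall f, L0plus f -> forall t : R, (0 <= t)%R ->
      rho (fun x => t%:E * f x) = t%:E * rho f) /\
  (forall f g, L0plus f -> L0plus g ->
      {ae mu, forall x, f x <= g x} -> rho f <= rho g) /\
  (forall E, measurable E -> mu E < +oo -> rho (eindic E) < +oo) /\
  (forall E, measurable E -> mu E < +oo -> forall eps : R, (0 < eps)%R ->
      exists2 delta : R, (0 < delta)%R &
        forall A, measurable A -> A `<=` E -> rho (eindic A) <= delta%:E ->
          mu A <= eps%:E) /\
  (exists kappa : R, (1 <= kappa)%R /\
      forall f g, L0plus f -> L0plus g ->
        rho (f \+ g) <= kappa%:E * (rho f + rho g)).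

Definition fatou_property (rho : (T -> \bar R) -> \bar R) : Prop :=
  forall f : nat -> T -> \bar R, (forall n, L0plus (f n)) ->
    (forall n x, f n x <= f n.+1 x) ->
    rho (fun x => limn (fun n => f n x)) <= limn (fun n => rho (f n)).

Definition abs_continuous (rho : (T -> \bar R) -> \bar R) (g : T -> \bar R)
  : Prop :=
  L0plus g /\ rho g < +oo /\
  forall f : nat -> T -> \bar R, (forall n, L0plus (f n)) ->
    (forall n x, f n.+1 x <= f n x) -> (forall x, f 0%N x <= g x) ->
    limn (fun n => rho (f n)) = rho (fun x => limn (fun n => f n x)).

End FunctionQuasiNorm.

Section StrongMeas.
Context {d : measure_display} {T : measurableType d} {R : realType}
  {X : normedModType R}.

Definition simple_function (s : T -> X) : Prop :=
  finite_set (range s) /\ forall y : X, measurable (s @^-1` [set y]).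

(* measurability of X-valued functions: strong measurability,
   i.e. pointwise limit of simple functions *)
Definition strongly_measurable (f : T -> X) : Prop :=
  exists s : nat -> T -> X, (forall k, simple_function (s k)) /\
    forall t, (fun k => s k t) @ \oo --> f t.

Definition enormf (f : T -> X) : T -> \bar R := fun t => (`| f t |)%:E.

End StrongMeas.

From HB Require Import structures.
From mathcomp Require Import all_boot all_order all_algebra.
From mathcomp Require Import all_classical all_reals all_analysis measurable_realfun.

(** Along any subsequence, [rho (|x - x_n|) --> 0] yields a further subsequence
    along which [x_n --> x] almost everywhere: on each set [E_k] of finite
    measure from the sigma-finite exhaustion, (F1)-(F2) give a Markov bound for
    the set where [|x - x_n|] is large and (F4) turns it into a summable measure
    bound, so Borel-Cantelli applies.  Along such a subsequence, the Fatou
    property applied to [inf_(k >= n) |x_k|] gives [rho |x| <= liminf rho |x_k|],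
    and absolute continuity of [g] applied to [min (g, sup_(k >= n) |x_k|)] gives
    [limsup rho |x_k| <= rho |x|].  As every subsequence has a further
    subsequence with [rho |x_k| --> rho |x|], the whole sequence converges. *)

Set Implicit Arguments.
Unset Strict Implicit.
Unset Printing Implicit Defensive.

Import Order.TTheory GRing.Theory Num.Theory.
Import numFieldNormedType.Exports.
Local Open Scope classical_set_scope.
Local Open Scope ring_scope.
Local Open Scope ereal_scope.

Lemma increasing_seq_ge (f : nat -> nat) : increasing_seq f -> forall n, (n <= f n)%N.
Proof.
move=> /increasing_seqP incrf; elim=> // n ih.
exact: leq_ltn_trans ih (incrf n).
Qed.

Lemma increasing_seq_cvg (f : nat -> nat) : increasing_seq f -> f @ \oo --> \oo.
Proof.
move=> /increasing_seq_ge f_ge P [N _ NP]; exists N => // n /= Nn.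
exact/NP/(leq_trans Nn).
Qed.

Lemma increasing_seq_choice (P : nat -> nat -> Prop) :
  (forall k N, exists2 n, (N <= n)%N & P k n) ->
  exists2 f : nat -> nat, increasing_seq f & forall k, P k (f k).
Proof.
move=> frequently.
have /choice[c Pc] : forall kN : nat * nat, exists n, (kN.2 <= n)%N /\ P kN.1 n.
  by move=> [k N]; have [n] := frequently k N; exists n.
pose f := fix f k := if k is k'.+1 then c (k, (f k').+1) else c (0, 0)%N.
exists f; last by case=> [|k]; [exact: (Pc (0, 0)%N).2 | exact: (Pc (k.+1, _)).2].
by apply/increasing_seqP => k; exact: (Pc (k.+1, (f k).+1)).1.
Qed.

Lemma cvg_subsubseq {T : topologicalType} (u : nat -> T) (l : T) :
  (forall f, increasing_seq f ->
     exists2 g, increasing_seq g & u \o f \o g @ \oo --> l) ->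
  u @ \oo --> l.
Proof.
move=> subsub U /= Ul; apply: contrapT => not_ev_U.
have [f incrf notU] : exists2 f, increasing_seq f & forall k, ~ U (u (f k)).
  apply: (@increasing_seq_choice (fun _ n => ~ U (u n))) => _ N.
  apply: contrapT => N_U; apply: not_ev_U; exists N => // n Nn.
  by apply: contrapT => nU; apply: N_U; exists n.
have [g _ /(_ U Ul)[N _ NU]] := subsub f incrf.
exact: notU (g N) (NU N (leqnn N)).
Qed.

Lemma cvge0_subseq_le {R : realType} (u : nat -> \bar R) (v : nat -> R) :
  u @ \oo --> 0 -> (forall k, (0 < v k)%R) ->
  exists2 psi, increasing_seq psi & forall k, u (psi k) <= (v k)%:E.
Proof.
move=> u_cvg0 v_gt0.
apply: (@increasing_seq_choice (fun k n => u n <= (v k)%:E)) => k N.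
have /u_cvg0[M _ ltM] : \forall y \near 0%:E, y < (v k)%:E.
  by apply/nbhs_EFin; near=> y; rewrite lte_fin; near: y; exact: lt_nbhsl.
by exists (maxn N M); [exact: leq_maxl | exact/ltW/ltM/leq_maxr].
Unshelve. all: by end_near.
Qed.

Section finitely_valued.
Context {d : measure_display} {T : measurableType d}.

(* [simple_function] is the instance [V := X]; the general codomain also covers
   the [\bar R]-valued compositions needed for measurability. *)
Definition finitely_valued {V : Type} (s : T -> V) :=
  finite_set (range s) /\ forall y : V, measurable (s @^-1` [set y]).

Lemma finitely_valued_preimage {V : Type} (s : T -> V) (B : set V) :
  finitely_valued s -> measurable (s @^-1` B).
Proof.
move=> [fin_s mfib].
have -> : s @^-1` B = \bigcup_(y in range s `&` B) s @^-1` [set y].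
  apply/seteqP; split=> [t Bt|t [y [_ By] /= ->//]].
  by exists (s t) => //; split => //; exists t.
by apply: fin_bigcup_measurable => //; exact: finite_setIl.
Qed.

Lemma finitely_valued_comp {V W : Type} (G : V -> W) (s : T -> V) :
  finitely_valued s -> finitely_valued (G \o s).
Proof.
move=> fv_s; split=> [|y].
  apply: sub_finite_set (finite_image G fv_s.1) => _ [t _ <-].
  by exists (s t) => //; exists t.
by rewrite comp_preimage; exact: finitely_valued_preimage.
Qed.
Arguments finitely_valued_comp {V W} G {s}.

Lemma finitely_valued_pair {V W : Type} (s : T -> V) (s' : T -> W) :
  finitely_valued s -> finitely_valued s' -> finitely_valued (fun t => (s t, s' t)).
Proof.
move=> [fin_s mfib] [fin_s' mfib']; split=> [|[y y']].
  by apply: sub_finite_set (finite_setX fin_s fin_s') => _ [t _ <-]; split; exists t.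
have -> : (fun t => (s t, s' t)) @^-1` [set (y, y')] =
    s @^-1` [set y] `&` s' @^-1` [set y'].
  by apply/seteqP; split=> t /=; case=> -> ->.
exact: measurableI.
Qed.

End finitely_valued.

Section strongly_measurable.
Context {d : measure_display} {T : measurableType d} {R : realType}
  {X : normedModType R}.
Implicit Types x y : T -> X.
Local Open Scope ring_scope.

Lemma strongly_measurableB x y : strongly_measurable x -> strongly_measurable y ->
  strongly_measurable (fun t => x t - y t).
Proof.
move=> [s [fv_s sx]] [s' [fv_s' s'y]]; exists (fun k t => s k t - s' k t); split.
  move=> k; exact: (finitely_valued_comp (fun p : X * X => p.1 - p.2)
    (finitely_valued_pair (fv_s k) (fv_s' k)) : simple_function _).
by move=> t; exact: cvgB.
Qed.

Lemma measurable_enormf x : strongly_measurable x -> measurable_fun setT (enormf x).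
Proof.
move=> [s [fv_s sx]]; apply: (emeasurable_fun_cvg (fun k => enormf (s k))).
  move=> k _ B _; rewrite setTI.
  exact: finitely_valued_preimage (finitely_valued_comp (fun v => (`|v|)%:E) (fv_s k)).
by move=> t _; apply: cvg_EFin; [exact: nearW | exact: cvg_norm].
Qed.

Lemma L0plus_enormf x : strongly_measurable x -> L0plus (enormf x).
Proof. by move=> smx; split=> [|t]; [exact: measurable_enormf | rewrite lee_fin]. Qed.

End strongly_measurable.

Section L0plus.
Context {d : measure_display} {T : measurableType d} {R : realType}.
Implicit Types (f g : T -> \bar R) (F : nat -> T -> \bar R).

Lemma L0plus_eindic (A : set T) : measurable A -> L0plus (eindic A : T -> \bar R).
Proof.
move=> mA; split=> [|t]; first exact/measurable_EFinP/measurable_indic.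
by rewrite /eindic lee_fin indicE.
Qed.

Lemma L0plus_mine f g : L0plus f -> L0plus g -> L0plus (fun t => mine (f t) (g t)).
Proof.
move=> [mf f_ge0] [mg g_ge0]; split=> [|t]; first exact: measurable_mine.
by rewrite le_min f_ge0 g_ge0.
Qed.

Lemma L0plus_einfs F n : (forall k, L0plus (F k)) -> L0plus (fun t => einfs (F ^~ t) n).
Proof.
move=> LF; split=> [|t]; first exact: measurable_fun_einfs (fun k => (LF k).1) n.
by apply: le_ereal_inf_tmp => _ [k _ <-]; exact: (LF k).2.
Qed.

Lemma L0plus_esups F n : (forall k, L0plus (F k)) -> L0plus (fun t => esups (F ^~ t) n).
Proof.
move=> LF; split=> [|t]; first exact: measurable_fun_esups (fun k => (LF k).1) n.
by apply: le_trans ((LF n).2 t) _; apply: ereal_sup_ubound; exists n => /=.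
Qed.

Lemma L0plus_limn F : (forall n, L0plus (F n)) -> (forall t, cvgn (F ^~ t)) ->
  L0plus (fun t => limn (F ^~ t)).
Proof.
move=> LF F_cvg; split=> [|t].
  by apply: (emeasurable_fun_cvg F) => [n|t _]; [exact: (LF n).1 | exact: F_cvg].
by apply: lime_ge (F_cvg t) _; apply: nearW => n; exact: (LF n).2.
Qed.

End L0plus.

Section borel_cantelli.
Context {d : measure_display} {T : measurableType d} {R : realType}.
Variable mu : {measure set T -> \bar R}.

Lemma ae_eventually_notin (A : nat -> set T) : (forall k, measurable (A k)) ->
  \sum_(k <oo) mu (A k) < +oo -> {ae mu, forall t, \forall k \near \oo, ~ A k t}.
Proof.
move=> mA sumA_fin; exists (lim_sup_set A); split.
- by apply: bigcap_measurable => // k _; exact: bigcup_measurable.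
- exact: lim_sup_set_cvg0.
move=> t /= not_ev n _; apply: contrapT => not_Ajt; apply: not_ev.
by exists n => // j nj Ajt; apply: not_Ajt; exists j.
Qed.

End borel_cantelli.

Section function_quasi_norm.
Context {d : measure_display} {T : measurableType d} {R : realType}.
Variables (mu : {measure set T -> \bar R}) (rho : (T -> \bar R) -> \bar R).
Hypothesis rhoN : function_quasi_norm mu rho.
Implicit Types (f g : T -> \bar R) (F : nat -> T -> \bar R).

Lemma rho_le_ae f g : L0plus f -> L0plus g ->
  {ae mu, forall t, f t <= g t} -> rho f <= rho g.
Proof. by case: rhoN => _ [+ _]; apply. Qed.

Lemma rho_le f g : L0plus f -> L0plus g -> (forall t, f t <= g t) -> rho f <= rho g.
Proof. by move=> Lf Lg fg; apply: rho_le_ae => //; exact: aeW. Qed.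

Lemma rho_indic_gt_le (A : set T) (c : R) f : measurable A -> (0 < c)%R -> L0plus f ->
  rho (eindic (A `&` [set t | c%:E < f t])) <= c^-1%:E * rho f.
Proof.
move=> mA c_gt0 Lf; have [rhoZ _] := rhoN.
have c_ge0 : (0 <= c^-1)%R by rewrite invr_ge0 ltW.
rewrite -rhoZ //; apply: rho_le.
- apply/L0plus_eindic/measurableI => //.
  by have := emeasurable_fun_o_infty measurableT Lf.1 c%:E; rewrite setTI.
- split=> [|t]; first exact: measurable_funeM Lf.1.
  by apply: mule_ge0; [rewrite lee_fin | exact: Lf.2].
move=> t; rewrite /eindic indicE.
have [/set_mem [_ /= /ltW cf]|_] := boolP (t \in _).
  by rewrite lee_pdivlMl // mule1.
by apply: mule_ge0; [rewrite lee_fin | exact: Lf.2].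
Qed.

Lemma rho_cvg0_ae_cvg0_subseq F : sigma_finite setT mu ->
  (forall k, L0plus (F k)) -> rho (F k) @[k --> \oo] --> 0 ->
  exists2 psi, increasing_seq psi & {ae mu, forall t, F (psi k) t @[k --> \oo] --> 0}.
Proof.
move=> /sigma_finiteP[E [ET E_nd /all_and2[mE E_fin]]] LF rhoF0.
have [_ [_ [_ [rho_abs _]]]] := rhoN.
pose eps k : R := ((2 ^ k.+1)%:R)^-1%R.
have eps_gt0 k : (0 < eps k)%R by rewrite invr_gt0 ltr0n expn_gt0.
have eps_cvg0 : eps @ \oo --> 0%R.
  have -> : eps = geometric 2^-1 2^-1.
    by apply/funext => k; rewrite /eps natrX -exprVn exprS.
  by apply: cvg_geometric; rewrite ger0_norm // invf_lt1 // ltr1n.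
have /choice[delta /all_and2[delta_gt0 deltaP]] : forall k, exists delta : R,
    (0 < delta)%R /\ forall A, measurable A -> A `<=` E k ->
      rho (eindic A) <= delta%:E -> mu A <= (eps k)%:E.
  by move=> k; have [delta] := rho_abs _ (mE k) (E_fin k) _ (eps_gt0 k); exists delta.
(* [delta k * eps k]: the Markov bound then gives [rho (eindic (A k)) <= delta k]. *)
have [psi psi_incr rho_psi] :=
  cvge0_subseq_le rhoF0 (fun k => mulr_gt0 (delta_gt0 k) (eps_gt0 k)).
exists psi => //.
pose A k := E k `&` [set t | (eps k)%:E < F (psi k) t].
have mA k : measurable (A k).
  apply: measurableI (mE k) _.
  have := emeasurable_fun_o_infty measurableT (LF (psi k)).1 (eps k)%:E.
  by rewrite setTI.
have muA k : mu (A k) <= (eps k)%:E.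
  apply: deltaP (mA k) (@subIsetl _ _ _) _.
  apply: le_trans (rho_indic_gt_le (mE k) (eps_gt0 k) (LF _)) _.
  apply: le_trans (lee_wpmul2l _ (rho_psi k)) _; first by rewrite lee_fin invr_ge0 ltW.
  by rewrite -EFinM mulrCA mulVf ?mulr1 ?gt_eqF.
have sumA_fin : \sum_(k <oo) mu (A k) < +oo.
  apply: le_lt_trans (ltry 1%R); apply: le_trans (epsilon_trick0 xpredT ler01).
  by apply: lee_nneseries => k _; rewrite ?div1r ?muA.
apply: filterS (ae_eventually_notin mA sumA_fin) => t ev_notA.
have [i Eit] : exists i, E i t.
  by have : setT t by []; rewrite ET => -[i _ Eit]; exists i.
apply: (@squeeze_cvge _ _ _ _ (cst 0) _ (fun k => (eps k)%:E)); last 2 first.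
- exact: cvg_cst.
- by apply: cvg_EFin; [exact: nearW | exact: eps_cvg0].
near=> k; rewrite (LF _).2 leNgt /=; apply/negP => eps_lt.
have : ~ A k t by near: k.
apply; split => //; suff /subsetPset : (E i <= E k)%O by apply.
by apply: E_nd; near: k; exact: nbhs_infty_ge.
Unshelve. all: by end_near.
Qed.

Section dominated_convergence.
Hypothesis rho_fatou : fatou_property rho.
Variable g : T -> \bar R.
Hypothesis g_abs : abs_continuous rho g.
Variables (F : nat -> T -> \bar R) (f : T -> \bar R).
Hypotheses (LF : forall k, L0plus (F k)) (Lf : L0plus f).
Hypothesis F_cvg : {ae mu, forall t, F k t @[k --> \oo] --> f t}.
Hypothesis F_le_g : {ae mu, forall t k, F k t <= g t}.

Let l n t := einfs (F ^~ t) n.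
Let u n t := mine (g t) (esups (F ^~ t) n).

Let Ll n : L0plus (l n). Proof. exact: L0plus_einfs. Qed.

Let Lu n : L0plus (u n). Proof. exact: L0plus_mine g_abs.1 (L0plus_esups n LF). Qed.

Let l_nd t : nondecreasing_seq (l ^~ t). Proof. exact: nondecreasing_einfs. Qed.

Let u_ni t : nonincreasing_seq (u ^~ t).
Proof.
by move=> m n mn; rewrite /u le_min ge_min lexx /= ge_min nonincreasing_esups ?orbT.
Qed.

Let l_le_F n t : l n t <= F n t.
Proof. by apply: ereal_inf_lbound; exists n => /=. Qed.

Let F_le_u n : {ae mu, forall t, F n t <= u n t}.
Proof.
apply: filterS F_le_g => t Fg; rewrite /u le_min Fg /=.
by apply: ereal_sup_ubound; exists n => /=.
Qed.

Let rho_l_cvg : cvgn (fun n => rho (l n)).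
Proof.
by apply: ereal_nondecreasing_is_cvgn => m n mn; apply: rho_le => // t; exact: l_nd.
Qed.

Let rho_u_cvg : cvgn (fun n => rho (u n)).
Proof.
by apply: ereal_nonincreasing_is_cvgn => m n mn; apply: rho_le => // t; exact: u_ni.
Qed.

Let rho_le_limn_l : rho f <= limn (fun n => rho (l n)).
Proof.
apply: le_trans (rho_fatou Ll (fun n t => l_nd t (leqnSn n))).
apply: rho_le_ae => //; first by apply: L0plus_limn => // t; exact: is_cvg_einfs.
by apply: filterS F_cvg => t /cvg_einfs/cvg_lim ->.
Qed.

Let limn_u_le_rho : limn (fun n => rho (u n)) <= rho f.
Proof.
have [_ [_ rho_g_abs]] := g_abs.
rewrite (rho_g_abs u Lu (fun n t => u_ni t (leqnSn n))); last first.
  by move=> t; rewrite ge_min lexx.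
apply: rho_le_ae => //.
  by apply: L0plus_limn => // t; exact: ereal_nonincreasing_is_cvgn.
apply: filterS F_cvg => t /cvg_esups esups_cvg.
rewrite -(cvg_lim _ esups_cvg) //; apply: lee_lim.
- exact: ereal_nonincreasing_is_cvgn.
- exact: ereal_nonincreasing_is_cvgn (nonincreasing_esups _).
- by apply: nearW => n; rewrite ge_min lexx orbT.
Qed.

Lemma rho_dominated_cvg : rho (F k) @[k --> \oo] --> rho f.
Proof.
have rho_l_le_F n : rho (l n) <= rho (F n) by apply: rho_le.
have rho_F_le_u n : rho (F n) <= rho (u n) by exact: rho_le_ae (F_le_u n).
have limn_l_le_u : limn (fun n => rho (l n)) <= limn (fun n => rho (u n)).
  by apply: lee_lim => //; apply: nearW => n; exact: le_trans (rho_F_le_u n).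
apply: (@squeeze_cvge _ _ _ _ (fun n => rho (l n)) _ (fun n => rho (u n))).
- by apply: nearW => n; rewrite rho_l_le_F rho_F_le_u.
- suff <- : limn (fun n => rho (l n)) = rho f by exact: rho_l_cvg.
  by apply/eqP; rewrite eq_le rho_le_limn_l (le_trans limn_l_le_u limn_u_le_rho).
- suff <- : limn (fun n => rho (u n)) = rho f by exact: rho_u_cvg.
  by apply/eqP; rewrite eq_le limn_u_le_rho (le_trans rho_le_limn_l limn_l_le_u).
Qed.

End dominated_convergence.

End function_quasi_norm.

Lemma norm_cvg_of_dist_cvg0 {R : realType} {X : normedModType R}
  (y : nat -> X) (x : X) :
  (`|x - y k|%R)%:E @[k --> \oo] --> 0 -> (`|y k|%R)%:E @[k --> \oo] --> (`|x|%R)%:E.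
Proof.
move=> /fine_cvgP[_ dist_cvg0]; apply: cvg_EFin; first exact: nearW.
apply: cvg_norm; apply/cvgrPdist_lt => e e_gt0.
by apply: cvgr_lt dist_cvg0 _ e_gt0.
Qed.

Theorem proposition3p33 (d : measure_display) (T : measurableType d)
  (R : realType) (mu : {measure set T -> \bar R})
  (rho : (T -> \bar R) -> \bar R) (X : completeNormedModType R)
  (x : T -> X) (xn : nat -> T -> X) (g : T -> \bar R) :
  sigma_finite setT mu ->
  function_quasi_norm mu rho ->
  fatou_property rho ->
  strongly_measurable x ->
  (forall n, strongly_measurable (xn n)) ->
  (fun n => rho (enormf (fun t => (x t - xn n t)%R))) @ \oo --> 0 ->
  abs_continuous rho g ->
  {ae mu, forall t, forall n, (`| xn n t |%R)%:E <= g t} ->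
  (fun n => rho (enormf (xn n))) @ \oo --> rho (enormf x).
Proof.
move=> mu_sfin rhoN rho_fatou x_sm xn_sm rho_dist_cvg0 g_abs xn_le_g.
apply: cvg_subsubseq => f f_incr.
have L_dist n := L0plus_enormf (strongly_measurableB x_sm (xn_sm n)).
have [h h_incr dist_ae_cvg0] :=
  rho_cvg0_ae_cvg0_subseq rhoN mu_sfin (fun k => L_dist (f k))
    (cvg_comp _ _ (increasing_seq_cvg f_incr) rho_dist_cvg0).
exists h => //.
apply: (rho_dominated_cvg rhoN rho_fatou g_abs (fun k => L0plus_enormf (xn_sm _))
  (L0plus_enormf x_sm)).
- by apply: filterS dist_ae_cvg0 => t; exact: norm_cvg_of_dist_cvg0.
- by apply: filterS xn_le_g => t xn_le_gt k; exact: xn_le_gt.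
Qed.
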